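(* Suppose $d=3$, let $D=\sum_{\rho\in\Sigma}n_\rho D_\rho$ with $(n_\rho)\in\mathbb{Z}^\Sigma$, and let $\Pi\subseteq\Sigma$. Then exactly one of the following holds: (i) $\tilde H^0(\Pi\cap\Xi;k)=0$ and the recession cone of the polyhedron $C_\Pi$ is $3$-dimensional; (ii) $\tilde H^0(\Pi\cap\Xi;k)\ne0$ and the set $C^{ss}_\Pi$ is either bounded or empty.
   Context: $k$ a field, $N\cong\mathbb{Z}^3$, $M=\operatorname{Hom}(N,\mathbb{Z})$, $\sigma\subset N_\mathbb{R}$ a strongly convex rational polyhedral cone of dimension $3$, $\Sigma=\sigma(1)$ its rays with primitive generators $n(\rho)$. $C_\Pi=\{m\in M_\mathbb{R}:\langle m,n(\rho)\rangle\le-n_\rho\ (\rho\in\Pi),\ \langle m,n(\rho)\rangle\ge-n_\rho\ (\rho\in\Sigma\setminus\Pi)\}$; $C^{ss}_\Pi$ is defined likewise but with strict inequality $<$ for $\rho\in\Pi$. The recession cone of $C_\Pi$ is the dual of $\sigma_\Pi=\operatorname{cone}(-n(\rho):\rho\in\Pi;\ n(\rho):\rho\notin\Pi)$. For $\Upsilon\subseteq\Sigma$, $\tau_\Upsilon$ is the minimal face of $\sigma$ whose rays contain $\Upsilon$; $\Xi=\{\Upsilon\subseteq\Sigma:\tau_\Upsilon\ne\sigma\}$ and $\Pi\cap\Xi=\{\Upsilon\in\Xi:\Upsilon\subseteq\Pi\}$. $\tilde H^j$ is reduced simplicial cohomology (augmented cochain complex, empty face in degree $-1$); by the paper's convention,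 for $\Pi=\emptyset$ all reduced cohomology of $\Pi\cap\Xi$ vanishes. *)

From HB Require Import structures.
From mathcomp Require Import all_boot all_order all_algebra.
From mathcomp Require Import reals.
Set Implicit Arguments. Unset Strict Implicit. Unset Printing Implicit Defensive.
Import Order.TTheory GRing.Theory Num.Theory.
Local Open Scope ring_scope.

(* N = Z^3 (integer row vectors), N_R = M_R = R^3 (real row vectors).
   The cone sigma is given by the list gens : 'I_r -> 'rV[int]_3 of the
   primitive generators n(rho) of its rays; Sigma = 'I_r. *)

Definition pairing (R : realType) (m : 'rV[R]_3) (v : 'rV[int]_3) : R :=
  \sum_(j < 3) m ord0 j * (v ord0 j)%:~R.

Definition in_cone (R : realType) r (gens : 'I_r -> 'rV[int]_3) (v : 'rV[R]_3) : Prop :=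
  exists lam : 'I_r -> R, (forall i, 0 <= lam i) /\
    v = \sum_(i < r) lam i *: map_mx (fun z : int => z%:~R) (gens i).

Definition rpair (R : realType) (m v : 'rV[R]_3) : R := \sum_(j < 3) m ord0 j * v ord0 j.

Definition in_dual (R : realType) r (gens : 'I_r -> 'rV[int]_3) (m : 'rV[R]_3) : Prop :=
  forall i, 0 <= pairing m (gens i).

Definition in_face (R : realType) r (gens : 'I_r -> 'rV[int]_3) (m v : 'rV[R]_3) : Prop :=
  in_cone gens v /\ rpair m v = 0.

Definition full_dim (R : realType) (C : 'rV[R]_3 -> Prop) : Prop :=
  exists A : 'M[R]_3, (forall i, C (row i A)) /\ \rank A = 3%N.

(* hypotheses: sigma = cone(gens) is a strongly convex rational polyhedral cone
   of dimension 3 whose rays are exactly the rays spanned by the gens (pairwise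
   distinct), each gens i being the primitive generator of its ray. *)
Definition ray_data (R : realType) r (gens : 'I_r -> 'rV[int]_3) : Prop :=
  [/\ (forall v : 'rV[R]_3, in_cone gens v -> in_cone gens (- v) -> v = 0),
      full_dim (@in_cone R r gens),
      (forall i, forall d : int, (forall j, (d %| gens i ord0 j)%Z) -> `|d| = 1),
      (forall i, exists m : 'rV[R]_3, in_dual gens m /\
          forall v, in_face gens m v <->
            exists t : R, 0 <= t /\ v = t *: map_mx (fun z : int => z%:~R) (gens i))
    & injective gens].

(* Upsilon in Xi: the minimal face tau_Upsilon of sigma whose rays contain
   Upsilon (the face sigma ∩ m^perp below) is different from sigma. *)
Definition in_Xi (R : realType) r (gens : 'I_r -> 'rV[int]_3) (U : {set 'I_r}) : Prop :=
  exists m : 'rV[R]_3,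
    [/\ in_dual gens m,
        (forall i, i \in U -> pairing m (gens i) = 0),
        (forall m' : 'rV[R]_3, in_dual gens m' ->
           (forall i, i \in U -> pairing m' (gens i) = 0) ->
           forall v, in_face gens m v -> in_face gens m' v)
      & exists v, in_cone gens v /\ ~ in_face gens m v].

Definition PiXi (R : realType) r (gens : 'I_r -> 'rV[int]_3) (Pi : {set 'I_r})
  (U : {set 'I_r}) : Prop := U \subset Pi /\ in_Xi R gens U.

(* augmented simplicial cochains with coefficients in k of a complex K on the
   ordered vertex set 'I_r: a j-cochain is (the restriction to faces of size
   j+1 of) a function {set 'I_r} -> k; the coboundary is the usual one. *)
Definition coboundary (k : fieldType) r (f : {set 'I_r} -> k) (S : {set 'I_r}) : k :=
  \sum_(i in S) (-1) ^+ #|[set x in S | (x < i)%N]| * f (S :\ i).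

(* reduced cohomology tilde H^j(K; k) = 0, for j >= -1 (faces of size j+1) *)
Definition reduced_cohom_zero (k : fieldType) r (K : {set 'I_r} -> Prop) (j : int) : Prop :=
  forall f : {set 'I_r} -> k,
    (forall S, K S -> Posz #|S| = j + 2 -> coboundary f S = 0) ->
    exists g : {set 'I_r} -> k,
      forall S, K S -> Posz #|S| = j + 1 -> f S = coboundary g S.

Definition C_Pi (R : realType) r (gens : 'I_r -> 'rV[int]_3) (nD : 'I_r -> int)
  (Pi : {set 'I_r}) (m : 'rV[R]_3) : Prop :=
  forall i, if i \in Pi then pairing m (gens i) <= - (nD i)%:~R
            else - (nD i)%:~R <= pairing m (gens i).

Definition Css_Pi (R : realType) r (gens : 'I_r -> 'rV[int]_3) (nD : 'I_r -> int)
  (Pi : {set 'I_r}) (m : 'rV[R]_3) : Prop :=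
  forall i, if i \in Pi then pairing m (gens i) < - (nD i)%:~R
            else - (nD i)%:~R <= pairing m (gens i).

(* the recession cone of C_Pi, i.e. the dual of
   sigma_Pi = cone(-n(rho) : rho in Pi; n(rho) : rho notin Pi) *)
Definition rec_cone_C_Pi (R : realType) r (gens : 'I_r -> 'rV[int]_3)
  (Pi : {set 'I_r}) (m : 'rV[R]_3) : Prop :=
  forall i, 0 <= pairing m (if i \in Pi then - gens i else gens i).

Definition bounded_set (R : realType) (C : 'rV[R]_3 -> Prop) : Prop :=
  exists B : R, forall m, C m -> forall j, `|m ord0 j| <= B.

Definition empty_set (R : realType) (C : 'rV[R]_3 -> Prop) : Prop :=
  forall m, ~ C m.

From HB Require Import structures.
From mathcomp Require Import all_boot all_order all_algebra.
From mathcomp Require Import reals.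
From mathcomp Require Import ring lra zify.
From Stdlib Require Import Classical.
Set Implicit Arguments. Unset Strict Implicit. Unset Printing Implicit Defensive.
Import Order.TTheory GRing.Theory Num.Theory.
Local Open Scope ring_scope.

(* A cross-section of the three-dimensional pointed cone sigma is a convex
   polygon whose vertices are the rays n(rho).  Hence any three rays are
   linearly independent, and the rays carry a cyclic order in which
   det(n_x, n_y, n_z) > 0 exactly for counterclockwise triples.  The proper
   faces of sigma are its rays and the cones over consecutive pairs, so
   Pi ∩ Xi is a subcomplex of the boundary circle of the polygon and its
   reduced H^0 vanishes iff Pi is empty or a cyclic interval of rays.
   If Pi is not a cyclic interval, there are a, c in Pi and b, d outside Pi in
   cyclic order: the plane through n_b and n_d disconnects Pi ∩ Xi, and the
   Plücker relation among n_a, n_b, n_c, n_d, whose coefficients are all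
   positive, bounds <m, n_a>, <m, n_b>, <m, n_c> on C^ss_Pi.  If Pi is a cyclic
   interval, the plane through the midpoints of the two polygon edges leaving
   it separates Pi strictly from the other rays; such a separating functional
   lies in the interior of the recession cone sigma_Pi^vee of C_Pi. *)

Definition primitive n (v : 'rV[int]_n) : Prop :=
  forall d : int, (forall j, (d %| v ord0 j)%Z) -> `|d| = 1.

Lemma primitive_neq0 n (v : 'rV[int]_n) : primitive v -> v != 0.
Proof.
move=> pv; apply/eqP => v0.
by have := pv 2 => /(_ (fun j => ltac:(by rewrite v0 mxE dvdz0))).
Qed.

Lemma primitive_eq n (u v : 'rV[int]_n) (j0 : 'I_n) :
  primitive u -> primitive v -> 0 < u ord0 j0 * v ord0 j0 ->
  u ord0 j0 *: v = v ord0 j0 *: u -> u = v.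
Proof.
move=> pu pv xy0 /rowP uv.
set x := u ord0 j0 in xy0 uv; set y := v ord0 j0 in xy0 uv.
have rel j : v ord0 j * x = u ord0 j * y.
  by have := uv j; rewrite !mxE mulrC => ->; rewrite mulrC.
have [a [b Hab]] := Bezoutz x y.
set g := gcdz x y in Hab.
have xn0 : x != 0 by apply: contraTneq xy0 => ->; rewrite mul0r ltxx.
have gn0 : g != 0 by rewrite gcdz_eq0 negb_and xn0.
have [p Hp] : exists p, x = p * g by apply/dvdzP; apply: dvdz_gcdl.
have [q Hq] : exists q, y = q * g by apply/dvdzP; apply: dvdz_gcdr.
(* By Bezout, u and v are both multiples of w = a u + b v. *)
pose w j := a * u ord0 j + b * v ord0 j.
have eu j : u ord0 j = p * w j.
  apply: (mulIf gn0).
  have : x * w j - u ord0 j * (a * x + b * y) = b * (v ord0 j * x - u ord0 j * y).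
    by rewrite /w; ring.
  by rewrite rel subrr mulr0 Hab => /eqP; rewrite subr_eq0 Hp => /eqP <-; ring.
have ev j : v ord0 j = q * w j.
  apply: (mulIf gn0).
  have : y * w j - v ord0 j * (a * x + b * y) = a * (u ord0 j * y - v ord0 j * x).
    by rewrite /w; ring.
  by rewrite -rel subrr mulr0 Hab => /eqP; rewrite subr_eq0 Hq => /eqP <-; ring.
have p1 : `|p| = 1 by apply: pu => j; rewrite eu dvdz_mulr.
have q1 : `|q| = 1 by apply: pv => j; rewrite ev dvdz_mulr.
have pq : p = q.
  have : 0 < p * q * (g * g) by move: xy0; rewrite Hp Hq; congr (0 < _); ring.
  rewrite pmulr_lgt0; last by clearbody g; move: gn0; nia.
  by move: p1 q1; lia.
by apply/rowP => j; rewrite eu ev pq.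
Qed.

(** * Linear algebra in R^3 *)

Local Notation i1 := (@Ordinal 3 1 isT).
Local Notation i2 := (@Ordinal 3 2 isT).

Lemma sum_ord3 (V : nmodType) (f : 'I_3 -> V) : \sum_(j < 3) f j = f ord0 + f i1 + f i2.
Proof.
rewrite !big_ord_recl big_ord0 addr0 addrA.
by congr (_ + _ + _); congr f; apply/val_inj.
Qed.

Lemma ord3_ind (P : 'I_3 -> Prop) : P ord0 -> P i1 -> P i2 -> forall j, P j.
Proof.
move=> h0 h1 h2 [[|[|[|//]]] hj].
- by have -> : Ordinal hj = ord0 by apply/val_inj.
- by have -> : Ordinal hj = i1 by apply/val_inj.
- by have -> : Ordinal hj = i2 by apply/val_inj.
Qed.

Section Space.
Variable R : realType.
Implicit Types (a b c d m u v : 'rV[R]_3).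

Local Notation vx v := (v ord0 ord0).
Local Notation vy v := (v ord0 i1).
Local Notation vz v := (v ord0 i2).

Lemma rpairE m v : rpair m v = vx m * vx v + vy m * vy v + vz m * vz v.
Proof. by rewrite /rpair sum_ord3. Qed.

Lemma rpairC m v : rpair m v = rpair v m.
Proof. by apply: eq_bigr => j _; rewrite mulrC. Qed.

Lemma rpairD m u v : rpair m (u + v) = rpair m u + rpair m v.
Proof. by rewrite /rpair -big_split; apply: eq_bigr => j _; rewrite mxE mulrDr. Qed.

Lemma rpairZ m t v : rpair m (t *: v) = t * rpair m v.
Proof. by rewrite /rpair mulr_sumr; apply: eq_bigr => j _; rewrite mxE mulrCA. Qed.

Lemma rpairN m v : rpair m (- v) = - rpair m v.
Proof. by rewrite -scaleN1r rpairZ mulN1r. Qed.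

Lemma rpairNl m v : rpair (- m) v = - rpair m v.
Proof. by rewrite rpairC rpairN rpairC. Qed.

Lemma rpair0 m : rpair m 0 = 0.
Proof. by rewrite -(scale0r 0) rpairZ mul0r. Qed.

Lemma rpairDl m1 m2 v : rpair (m1 + m2) v = rpair m1 v + rpair m2 v.
Proof. by rewrite rpairC rpairD !(rpairC v). Qed.

Lemma rpairZl t m v : rpair (t *: m) v = t * rpair m v.
Proof. by rewrite rpairC rpairZ rpairC. Qed.

Lemma rpair_suml (I : finType) (F : I -> 'rV[R]_3) v :
  rpair (\sum_i F i) v = \sum_i rpair (F i) v.
Proof.
apply: (big_ind2 (fun x y => rpair x v = y)) => [|x1 x2 y1 y2 <- <-|//].
  by rewrite rpairC rpair0.
exact: rpairDl.
Qed.

Lemma rpair_sumr (I : finType) (F : I -> 'rV[R]_3) m :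
  rpair m (\sum_i F i) = \sum_i rpair m (F i).
Proof.
by rewrite rpairC rpair_suml; apply: eq_bigr => i _; rewrite rpairC.
Qed.

Lemma rpair_delta v j : rpair (delta_mx ord0 j) v = v ord0 j.
Proof. by move: j; apply: ord3_ind; rewrite rpairE !mxE /=; ring. Qed.

Lemma rpair_self_eq0 v : rpair v v = 0 -> v = 0.
Proof.
rewrite rpairE => h.
have [hx hy hz] : [/\ vx v ^+ 2 = 0, vy v ^+ 2 = 0 & vz v ^+ 2 = 0].
  have := sqr_ge0 (vx v); have := sqr_ge0 (vy v); have := sqr_ge0 (vz v).
  rewrite !expr2; split; lra.
by apply/rowP; apply: ord3_ind; rewrite mxE; apply/eqP; rewrite -sqrf_eq0 ?hx ?hy ?hz.
Qed.

Definition det3 a b c :=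
  vx a * (vy b * vz c - vz b * vy c) - vy a * (vx b * vz c - vz b * vx c)
  + vz a * (vx b * vy c - vy b * vx c).

Definition cross a b : 'rV[R]_3 :=
  \row_j (if j == ord0 then vy a * vz b - vz a * vy b
          else if j == i1 then vz a * vx b - vx a * vz b
          else vx a * vy b - vy a * vx b).

Lemma rpair_cross a b c : rpair (cross a b) c = det3 a b c.
Proof. by rewrite rpairE !mxE /= /det3; ring. Qed.

Lemma cross_cross m a b : cross m (cross a b) = rpair m b *: a - rpair m a *: b.
Proof. by apply/rowP; apply: ord3_ind; rewrite !(rpairE, mxE) /=; ring. Qed.

Lemma det3_cyc a b c : det3 a b c = det3 b c a.
Proof. by rewrite /det3; ring. Qed.

Lemma det3_swap23 a b c : det3 a b c = - det3 a c b.
Proof. by rewrite /det3; ring. Qed.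

Lemma det3_aac a c : det3 a a c = 0.
Proof. by rewrite /det3; ring. Qed.

Lemma det3_aba a b : det3 a b a = 0.
Proof. by rewrite /det3; ring. Qed.

Lemma det3_abb a b : det3 a b b = 0.
Proof. by rewrite /det3; ring. Qed.

Lemma cross0r m : cross m 0 = 0.
Proof. by apply/rowP => j; rewrite !mxE /=; case: ifP => _; [|case: ifP => _]; ring. Qed.

Lemma det3DD a b c d e :
  det3 (a + b) (c + d) e = det3 a c e + det3 a d e + det3 b c e + det3 b d e.
Proof. by rewrite /det3 !mxE; ring. Qed.

Lemma det3_plucker a b c d :
  det3 b c d *: a - det3 a c d *: b + det3 a b d *: c - det3 a b c *: d = 0.
Proof. by apply/rowP; apply: ord3_ind; rewrite !mxE /det3 /=; ring. Qed.

Lemma det3_cramer m a b c :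
  rpair m a *: cross b c + rpair m b *: cross c a + rpair m c *: cross a b = det3 a b c *: m.
Proof. by apply/rowP; apply: ord3_ind; rewrite !(rpairE, mxE) /det3 /=; ring. Qed.

Definition rows3 a b c : 'M[R]_3 := \matrix_(i, j) (nth 0 [:: a; b; c] i) ord0 j.

Lemma row_rows3 a b c i : row i (rows3 a b c) = nth 0 [:: a; b; c] i.
Proof. by apply/rowP => j; rewrite !mxE. Qed.

Lemma rank_rows3 a b c : det3 a b c != 0 -> \rank (rows3 a b c) = 3%N.
Proof.
move=> d0; apply: mxrank_unit; rewrite -row_free_unit; apply/row_freeP.
pose dual := nth 0 [:: cross b c; cross c a; cross a b].
exists (\matrix_(j, k) (dual k ord0 j / det3 a b c)).
apply/matrixP => i k; rewrite !mxE.
under eq_bigr => j _ do rewrite !mxE mulrA.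
rewrite -mulr_suml -/(rpair (nth 0 [:: a; b; c] i) (dual k)) rpairC.
have -> : rpair (dual k) (nth 0 [:: a; b; c] i) = (i == k)%:R * det3 a b c.
  by move: i k; apply: ord3_ind; apply: ord3_ind; rewrite /= rpair_cross /det3 /=; ring.
by case: (i == k); rewrite ?mul1r ?divff ?mul0r.
Qed.

Lemma exists_lower_bound (I : finType) (f : I -> R) :
  (forall i, 0 < f i) -> exists2 e, 0 < e & forall i, e <= f i.
Proof.
move=> hf; suff [e e0 he] : exists2 e, 0 < e & forall i, i \in enum I -> e <= f i.
  by exists e => // i; apply: he; rewrite mem_enum.
elim: (enum I) => [|x s [e e0 he]]; first by exists 1.
exists (Num.min e (f x)) => [|i]; first by rewrite lt_min e0 hf.
by rewrite in_cons => /orP [/eqP ->|/he]; rewrite ge_min ?lexx ?orbT // => ->.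
Qed.

Lemma full_dim_interior (I : finType) (v : I -> 'rV[R]_3) u :
  (forall i, 0 < rpair u (v i)) -> full_dim (fun m => forall i, 0 <= rpair m (v i)).
Proof.
move=> hu.
have [e e0 he] := exists_lower_bound
  (fun p : I * 'I_3 => divr_gt0 (hu p.1) (ltr_pwDl ltr01 (normr_ge0 (v p.1 ord0 p.2)))).
(* The perturbations u + e' e_j stay in the cone when e' <= e, and their
   determinant is e'^2 (e' + s). *)
set s := vx u + vy u + vz u.
have [e' [e'0 e'e e's]] : exists e', [/\ 0 < e', e' <= e & e' + s != 0].
  have [es0|es] := eqVneq (e + s) 0; last by exists e.
  by exists (e / 2); split; [lra | lra | apply/eqP; lra].
pose w j := u + e' *: delta_mx ord0 j.
have hw j i : 0 <= rpair (w j) (v i).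
  have := he (i, j); rewrite /= ler_pdivlMr ?(ltr_pwDl ltr01 (normr_ge0 _)) //.
  rewrite rpairDl rpairZl rpair_delta; set t := v i ord0 j => h.
  have := ler_norm (- t); rewrite normrN; have := ler_wpM2r (normr_ge0 t) e'e; nra.
exists (rows3 (w ord0) (w i1) (w i2)); split.
  by apply: ord3_ind => i; rewrite row_rows3 /=.
apply: rank_rows3.
have -> : det3 (w ord0) (w i1) (w i2) = e' ^+ 2 * (e' + s).
  by rewrite /det3 /w /s !mxE /=; ring.
by rewrite mulf_neq0 // expf_neq0 // gt_eqF.
Qed.

Lemma balanced_bound (D1 D2 D3 D4 u1 u3 l2 l4 : R) :
  0 < D1 -> 0 <= D2 -> 0 <= D3 -> 0 <= D4 ->
  exists B, forall x1 x2 x3 x4, D1 * x1 + D3 * x3 = D2 * x2 + D4 * x4 ->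
    x1 <= u1 -> x3 <= u3 -> l2 <= x2 -> l4 <= x4 -> `|x1| <= B.
Proof.
move=> D10 D20 D30 D40; set L := (D2 * l2 + D4 * l4 - D3 * u3) / D1.
exists (`|L| + `|u1|) => x1 x2 x3 x4 rel x1u x3u x2l x4l.
have Lx1 : L <= x1.
  rewrite /L ler_pdivrMr // mulrC.
  have := ler_wpM2l D20 x2l; have := ler_wpM2l D40 x4l; have := ler_wpM2l D30 x3u; lra.
have := normr_ge0 u1; have := normr_ge0 L; have := ler_norm u1; have := ler_norm (- L).
rewrite normrN ler_norml => nL nu L0 u0.
by apply/andP; split; lra.
Qed.

Lemma bounded_of_pairings a b c (C : 'rV[R]_3 -> Prop) B :
  det3 a b c != 0 ->
  (forall m, C m -> [/\ `|rpair m a| <= B, `|rpair m b| <= B & `|rpair m c| <= B]) ->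
  bounded_set C.
Proof.
move=> d0 hC; have := det3_cramer _ a b c.
move: (det3 a b c) d0 (cross b c) (cross c a) (cross a b) => D d0 X Y Z cramer.
pose T j := `|X ord0 j| + `|Y ord0 j| + `|Z ord0 j|.
have T0 j : 0 <= T j by rewrite !addr_ge0.
exists ((T ord0 + T i1 + T i2) * `|B| / `|D|) => m /hC [ha hb hc] j.
have hT : T j <= T ord0 + T i1 + T i2.
  by move: j {ha hb hc}; apply: ord3_ind; have := T0 ord0; have := T0 i1; have := T0 i2; lra.
rewrite ler_pdivlMr ?normr_gt0 // -normrM mulrC.
have /rowP/(_ j) := cramer m; rewrite !mxE => <-.
have nB x : `|x| <= B -> `|x| <= `|B| by move=> h; apply: le_trans h (ler_norm B).
apply: le_trans (ler_normD _ _) _; apply: le_trans (lerD (ler_normD _ _) (lexx _)) _.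
rewrite !normrM; apply: le_trans (ler_wpM2r (normr_ge0 B) hT).
rewrite /T !mulrDl; do 2?[apply: lerD]; rewrite mulrC; apply: ler_wpM2l; rewrite ?normr_ge0 ?nB //.
Qed.

End Space.

(** * Reduced cohomology in degree zero *)

Section Cochains.
Variables (k : fieldType) (n : nat).
Implicit Types (f : {set 'I_n} -> k) (K : {set 'I_n} -> Prop).

Lemma coboundary1 f x : coboundary f [set x] = f set0.
Proof.
rewrite /coboundary big_set1.
have -> : [set y in [set x] | (y < x)%N] = set0.
  by apply/setP => y; rewrite !inE; case: eqP => // ->; rewrite ltnn.
by rewrite cards0 expr0 mul1r setDv.
Qed.

Lemma coboundary2 f (x y : 'I_n) : (x < y)%N ->
  coboundary f [set x; y] = f [set y] - f [set x].
Proof.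
move=> xy; have xny : x != y by rewrite neq_ltn xy.
rewrite /coboundary big_setU1 ?inE //= big_set1.
have -> : [set z in [set x; y] | (z < x)%N] = set0.
  apply/setP => z; rewrite !inE; case: (eqVneq z x) => [->|_]; first by rewrite ltnn.
  by case: eqP => // ->; lia.
have -> : [set z in [set x; y] | (z < y)%N] = [set x].
  apply/setP => z; rewrite !inE; case: (eqVneq z x) => [->|_] //=.
  by case: eqP => // ->; rewrite ltnn.
have -> : [set x; y] :\ y = [set x].
  apply/setP => z; rewrite !inE; case: (eqVneq z y) => [->|]; rewrite ?orbF //.
  by rewrite eq_sym (negbTE xny).
rewrite setU1K ?inE // cards0 cards1 expr0 expr1 mul1r mulN1r; ring.
Qed.

Lemma coboundary2_eq0 f x y : x != y ->
  (coboundary f [set x; y] == 0) = (f [set x] == f [set y]).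
Proof.
case: (ltngtP x y) => [xy _|yx _|/val_inj -> /eqP //].
  by rewrite coboundary2 // subr_eq0 eq_sym.
by rewrite setUC coboundary2 // subr_eq0.
Qed.

Lemma reduced_cohom0_neq0 K (side : 'I_n -> bool) a c :
  K [set a] -> K [set c] -> side a != side c ->
  (forall x y, x != y -> K [set x; y] -> side x = side y) ->
  ~ reduced_cohom_zero k K 0.
Proof.
move=> Ka Kc sac hside hK.
pose f (S : {set 'I_n}) : k := [exists x in S, side x]%:R.
have f1 x : f [set x] = (side x)%:R.
  rewrite /f; congr ((nat_of_bool _)%:R); apply/existsP/idP => [[y /andP [/set1P -> //]]|sx].
  by exists x; rewrite set11.
have [|g hg] := hK f.
  move=> S KS; rewrite add0r => -[] /eqP /cards2P [x [y [xy eS]]].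
  by rewrite eS in KS *; apply/eqP; rewrite coboundary2_eq0 // !f1 (hside x y).
have := hg _ Ka; have := hg _ Kc; rewrite !cards1 => /(_ erefl) + /(_ erefl).
rewrite !coboundary1 !f1 => <-; move: sac.
by case: (side a); case: (side c) => // _ /eqP; rewrite ?oner_eq0 // eq_sym oner_eq0.
Qed.

Lemma reduced_cohom0_eq0 K x0 (h : 'I_n -> nat) :
  (forall x, K [set x] -> x != x0 -> exists y, [/\ K [set y], K [set x; y] & (h y < h x)%N]) ->
  reduced_cohom_zero k K 0.
Proof.
move=> descent f hf.
have const x : K [set x] -> f [set x] = f [set x0].
  elim: {x}(h x).+1 {-2}x (ltnSn (h x)) => // m IH x hx Kx.
  have [->|nx] := eqVneq x x0; first by [].
  have [y [Ky Kxy hy]] := descent x Kx nx.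
  have xy : x != y by apply: contraTneq hy => ->; rewrite ltnn.
  rewrite -(IH y _ Ky); last by lia.
  by apply/eqP; rewrite -coboundary2_eq0 //; apply/eqP/hf; rewrite ?cards2 ?xy.
exists (fun _ => f [set x0]) => S KS; rewrite add0r => -[] /eqP /cards1P [x eS].
by rewrite eS coboundary1 const // -eS.
Qed.

End Cochains.

(** * The rays of the cone *)

Lemma exists_notin (T : finType) (S : {set T}) : (#|S| < #|T|)%N -> exists c, c \notin S.
Proof.
move=> hS; have : (0 < #|~: S|)%N by move: (cardsC S); lia.
by case/card_gt0P => c; rewrite inE; exists c.
Qed.

Section Cone.
Variables (R : realType) (r : nat) (gens : 'I_r -> 'rV[int]_3).
Hypothesis RD : ray_data R gens.

Definition gen i : 'rV[R]_3 := map_mx (fun z : int => z%:~R) (gens i).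

Local Notation dt a b c := (det3 (gen a) (gen b) (gen c)).

Lemma pairing_gen m i : pairing m (gens i) = rpair m (gen i).
Proof. by apply: eq_bigr => j _; rewrite mxE. Qed.

Lemma pairingN (m : 'rV[R]_3) (v : 'rV[int]_3) : pairing m (- v) = - pairing m v.
Proof. by rewrite /pairing -sumrN; apply: eq_bigr => j _; rewrite mxE mulrNz mulrN. Qed.

Lemma gens_primitive i : primitive (gens i).
Proof. by case: RD => _ _ h _ _; apply: h. Qed.
Arguments gens_primitive : clear implicits.

Lemma gens_inj : injective gens.
Proof. by case: RD. Qed.

Lemma gen_in_cone i : in_cone gens (gen i).
Proof.
exists (fun j => (j == i)%:R); split => [j|]; first by rewrite ler0n.
rewrite (bigD1 i) //= eqxx scale1r big1 ?addr0 // => j /negbTE ->.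
by rewrite scale0r.
Qed.

Lemma gen_ray_inj i j t : 0 <= t -> gen j = t *: gen i -> j = i.
Proof.
move=> t0 /rowP eji.
have co l : (gens j ord0 l)%:~R = t * (gens i ord0 l)%:~R :> R.
  by have := eji l; rewrite !mxE.
have [l0 gi0] : exists l0, gens i ord0 l0 != 0.
  apply/existsP; move: (primitive_neq0 (gens_primitive i)); apply: contraNT.
  by rewrite negb_exists => /forallP h; apply/eqP/rowP => l; rewrite mxE; apply/eqP/negPn/h.
have tpos : 0 < t.
  rewrite lt_def t0 andbT; move: (primitive_neq0 (gens_primitive j)); apply: contraNneq => t0'.
  by apply/eqP/rowP => l; rewrite mxE; apply/eqP; rewrite -(eqr_int R) co t0' mul0r.
apply/esym/gens_inj; apply: (@primitive_eq _ _ _ l0 (gens_primitive i) (gens_primitive j)).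
  rewrite -(ltr0z R) rmorphM /= co mulrCA -expr2 mulr_gt0 //.
  by rewrite exprn_even_gt0 //= intr_eq0.
by apply/rowP => l; apply: (@intr_inj R); rewrite !mxE !rmorphM /= !co; ring.
Qed.

Lemma supporting_functional i : exists m : 'rV[R]_3,
  [/\ forall j, 0 <= rpair m (gen j), rpair m (gen i) = 0
    & forall j, j != i -> 0 < rpair m (gen j)].
Proof.
case: RD => _ _ _ /(_ i) [m [dual face]] _.
have dual' j : 0 <= rpair m (gen j) by rewrite -pairing_gen.
have [_ mi] : in_face gens m (gen i) by apply/face; exists 1; rewrite scale1r.
exists m; split => // j ji; rewrite lt_def dual' andbT.
apply: contra ji => /eqP mj.
by have [t [t0 /(gen_ray_inj t0) ->]] := (face (gen j)).1 (conj (gen_in_cone j) mj).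
Qed.

Lemma three_le_rays : (2 < r)%N.
Proof.
case: RD => _ [A [hA rk]] _ _ _.
have [lam hl] := fin_all_exists hA.
pose G : 'M[R]_(r, 3) := \matrix_(i, j) gen i ord0 j.
have eA : A = \matrix_(l, i) lam l i *m G.
  apply/row_matrixP => l; rewrite row_mul mulmx_sum_row (proj2 (hl l)).
  apply: eq_bigr => i _; rewrite !mxE; congr (_ *: _).
  by apply/rowP => j; rewrite !mxE.
by move: (mxrankM_maxr (\matrix_(l, i) lam l i) G) (rank_leq_row G); rewrite -eA rk; lia.
Qed.

Lemma interior_functional : exists m0 : 'rV[R]_3, forall j, 0 < rpair m0 (gen j).
Proof.
have [mr hmr] := fin_all_exists supporting_functional.
exists (\sum_i mr i) => j; rewrite rpair_suml.
have [i0] : exists i0, i0 \notin [set j].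
  by apply: exists_notin; rewrite cards1 card_ord; have := three_le_rays; lia.
rewrite in_set1 => i0j; rewrite (bigD1 i0) //=.
have [_ _ /(_ j) pos] := hmr i0; rewrite eq_sym in i0j; have := pos i0j.
have : 0 <= \sum_(i | i != i0) rpair (mr i) (gen j) by apply: sumr_ge0 => i _; have [] := hmr i.
lra.
Qed.

Lemma gens_comb_neq0 a b c d (al be ga de : R) :
  a != d -> 0 < al -> 0 <= be -> 0 <= ga ->
  ~ (forall m, al * rpair m (gen a) + be * rpair m (gen b) + ga * rpair m (gen c)
               + de * rpair m (gen d) = 0).
Proof.
move=> ad al0 be0 ga0 rel; have [de0|de0] := lerP 0 de.
  have [m0 m0pos] := interior_functional; have := rel m0.
  have := mulr_gt0 al0 (m0pos a); have := mulr_ge0 be0 (ltW (m0pos b)).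
  have := mulr_ge0 ga0 (ltW (m0pos c)); have := mulr_ge0 de0 (ltW (m0pos d)).
  lra.
have [m [dual md pos]] := supporting_functional d; have := rel m.
rewrite md mulr0 addr0; have := mulr_gt0 al0 (pos a ad).
have := mulr_ge0 be0 (dual b); have := mulr_ge0 ga0 (dual c).
lra.
Qed.

Lemma gens_indep3_pos a b c (al be ga : R) : a != b -> a != c -> 0 < al ->
  ~ (forall m, al * rpair m (gen a) + be * rpair m (gen b) + ga * rpair m (gen c) = 0).
Proof.
move=> ab ac al0 rel; have [be0|be0] := lerP 0 be.
  by apply: (@gens_comb_neq0 a b a c al be 0 ga ac al0 be0 (lexx 0)) => m; have := rel m; lra.
have [ga0|ga0] := lerP 0 ga.
  by apply: (@gens_comb_neq0 a c a b al ga 0 be ab al0 ga0 (lexx 0)) => m; have := rel m; lra.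
have ba : b != a by rewrite eq_sym.
apply: (@gens_comb_neq0 b c b a (- be) (- ga) 0 (- al) ba _ _ (lexx 0)).
- by rewrite oppr_gt0.
- by rewrite oppr_ge0 ltW.
- by move=> m; have := rel m; lra.
Qed.

Lemma gens_indep3 a b c (al be ga : R) : a != b -> a != c ->
  (forall m, al * rpair m (gen a) + be * rpair m (gen b) + ga * rpair m (gen c) = 0) -> al = 0.
Proof.
move=> ab ac rel; case: (ltgtP al 0) => // al0; exfalso.
  apply: (@gens_indep3_pos a b c (- al) (- be) (- ga) ab ac); first by rewrite oppr_gt0.
  by move=> m; have := rel m; lra.
exact: (gens_indep3_pos ab ac al0 rel).
Qed.

Lemma dt_neq0 a b c : a != b -> a != c -> b != c -> dt a b c != 0.
Proof.
(* With p = n_a x n_b, the Plücker relation of n_a, n_b, n_c, p has coefficient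
   |p|^2 on n_c, so p = 0 and n_a, n_b are proportional. *)
move=> ab ac bc; apply/eqP => d0; set p := cross (gen a) (gen b).
have ca : c != a by rewrite eq_sym.
have cb : c != b by rewrite eq_sym.
have p0 : p = 0.
  apply: rpair_self_eq0; rewrite {1}/p rpair_cross.
  apply: (@gens_indep3 c a b _ (det3 (gen b) (gen c) p) (- det3 (gen a) (gen c) p) ca cb) => m.
  have := congr1 (rpair m) (det3_plucker (gen a) (gen b) (gen c) p).
  by rewrite !(rpairD, rpairN, rpairZ) rpair0 d0 => <-; ring.
have [m0 m0pos] := interior_functional.
suff : rpair m0 (gen b) = 0 by move/eqP; rewrite gt_eqF.
apply: (@gens_indep3 a b c _ (- rpair m0 (gen a)) 0 ab ac) => m.
have := congr1 (rpair m) (cross_cross m0 (gen a) (gen b)).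
by rewrite -/p p0 cross0r !(rpairD, rpairN, rpairZ) rpair0 => h; lra.
Qed.

Lemma rpair_gen3_eq0 m a b c : a != b -> a != c -> b != c ->
  rpair m (gen a) = 0 -> rpair m (gen b) = 0 -> rpair m (gen c) = 0 -> m = 0.
Proof.
move=> ab ac bc ma mb mc; apply/eqP.
have : dt a b c *: m == 0 by rewrite -det3_cramer ma mb mc !scale0r !addr0.
by rewrite scaler_eq0 (negbTE (dt_neq0 ab ac bc)).
Qed.

Lemma in_face_sub m m' (U : {set 'I_r}) v :
  (forall i, i \in U -> rpair m (gen i) = 0) -> (forall i, i \notin U -> 0 < rpair m (gen i)) ->
  (forall i, i \in U -> rpair m' (gen i) = 0) -> in_face gens m v -> in_face gens m' v.
Proof.
move=> m0 mpos m'0 [[lam [lam0 ->]] mv]; split; first by exists lam.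
have terms0 i : lam i * rpair m (gen i) = 0.
  move: mv; rewrite rpair_sumr (eq_bigr _ (fun i _ => rpairZ _ _ _)) => /eqP.
  rewrite psumr_eq0 => [/allP/(_ i (mem_index_enum i))/implyP/(_ isT)/eqP //|j _].
  by apply: mulr_ge0 => //; case: (boolP (j \in U)) => [/m0 ->|/mpos/ltW].
rewrite rpair_sumr big1 // => i _; rewrite rpairZ.
have [/m'0 -> |iU] := boolP (i \in U); first by rewrite mulr0.
by move/eqP: (terms0 i); rewrite mulf_eq0 (gt_eqF (mpos i iU)) orbF => /eqP ->; rewrite mul0r.
Qed.

Lemma in_Xi_of_functional (U : {set 'I_r}) m :
  (forall i, i \in U -> rpair m (gen i) = 0) -> (forall i, i \notin U -> 0 < rpair m (gen i)) ->
  (exists c, c \notin U) -> in_Xi R gens U.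
Proof.
move=> m0 mpos [c cU]; exists m; split.
- by move=> i; rewrite pairing_gen; case: (boolP (i \in U)) => [/m0 ->|/mpos/ltW].
- by move=> i /m0; rewrite pairing_gen.
- move=> m' _ m'0 v; apply: in_face_sub m0 mpos _ => i /m'0.
  by rewrite pairing_gen.
- exists (gen c); split; first exact: gen_in_cone.
  by case=> _ /eqP; rewrite gt_eqF ?mpos.
Qed.

Lemma in_Xi_set1 a : in_Xi R gens [set a].
Proof.
have [m [_ ma pos]] := supporting_functional a.
apply: (in_Xi_of_functional (m := m)) => [i /set1P -> //|i|].
  by rewrite in_set1; apply: pos.
by apply: exists_notin; rewrite cards1 card_ord; have := three_le_rays; lia.
Qed.

Lemma in_Xi_set2 a b : a != b -> (forall c, c != a -> c != b -> 0 < dt a b c) ->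
  in_Xi R gens [set a; b].
Proof.
move=> ab pos; apply: (in_Xi_of_functional (m := cross (gen a) (gen b))) => [i|i|].
- by rewrite in_set2 rpair_cross => /orP [] /eqP ->; rewrite ?det3_aba ?det3_abb.
- by rewrite in_set2 negb_or rpair_cross => /andP []; apply: pos.
- by apply: exists_notin; rewrite cards2 ab card_ord; have := three_le_rays; lia.
Qed.

Lemma in_Xi_set2_side a b c d : in_Xi R gens [set a; b] -> a != b ->
  c != a -> c != b -> d != a -> d != b -> 0 < dt a b c -> 0 < dt a b d.
Proof.
case=> m [dual mU _ [v [v_cone v_face]]] ab ca cb da db hc.
have ma : rpair m (gen a) = 0 by rewrite -pairing_gen mU ?set21.
have mb : rpair m (gen b) = 0 by rewrite -pairing_gen mU ?set22.
have pos x : x != a -> x != b -> 0 < rpair m (gen x).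
  move=> xa xb; rewrite lt_def -pairing_gen dual andbT pairing_gen.
  apply/eqP => mx; apply: v_face; split => //.
  by rewrite (@rpair_gen3_eq0 m a b x) ?mx // 1?eq_sym // rpairC rpair0.
have := congr1 (rpair m) (det3_plucker (gen a) (gen b) (gen c) (gen d)).
rewrite !(rpairD, rpairN, rpairZ) rpair0 ma mb => rel.
have := mulr_gt0 hc (pos d da db); have := pos c ca cb; nra.
Qed.

Lemma in_Xi_set2_side_dir i j b d : in_Xi R gens [set i; j] -> i != j -> b != d ->
  i != b -> i != d -> j != b -> j != d -> 0 < dt b d i -> 0 < dt b d j.
Proof.
move=> hX ij bd ib id jb jd hi.
have [bj dj bi di] : [/\ b != j, d != j, b != i & d != i] by rewrite !(eq_sym _ j) !(eq_sym _ i).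
have := dt_neq0 bd bj dj; case: (ltgtP (dt b d j) 0) => // hj _; exfalso.
(* Since n_b and n_d lie on the same side of the face spanned by n_i and n_j,
   the Plücker relation would put n_b or n_d in the cone over the other three. *)
have rel m : dt d i j * rpair m (gen b) - dt b i j * rpair m (gen d)
    + dt b d j * rpair m (gen i) - dt b d i * rpair m (gen j) = 0.
  by have := congr1 (rpair m) (det3_plucker (gen b) (gen d) (gen i) (gen j));
     rewrite !(rpairD, rpairN, rpairZ) rpair0.
have side : 0 < dt b i j -> 0 < dt d i j.
  by rewrite (det3_cyc (gen b)) (det3_cyc (gen d)); apply: in_Xi_set2_side.
have side' : 0 < dt d i j -> 0 < dt b i j.
  by rewrite (det3_cyc (gen b)) (det3_cyc (gen d)); apply: in_Xi_set2_side.
have := dt_neq0 bi bj ij; have := dt_neq0 di dj ij.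
case: (ltgtP (dt b i j) 0) => [nb|pb|//] pd _.
- have nd : dt d i j < 0 by move: pd; case: (ltgtP (dt d i j) 0) => // /side'; lra.
  apply: (@gens_comb_neq0 b i j d (- dt d i j) (- dt b d j) (dt b d i) (dt b i j) bd).
  + by rewrite oppr_gt0.
  + by rewrite oppr_ge0 ltW.
  + exact: ltW.
  + by move=> m; have := rel m; lra.
- apply: (@gens_comb_neq0 d i j b (dt b i j) (- dt b d j) (dt b d i) (- dt d i j)).
  + by rewrite eq_sym.
  + exact: pb.
  + by rewrite oppr_ge0 ltW.
  + exact: ltW.
  + by move=> m; have := rel m; have := side pb; lra.
Qed.

Lemma in_Xi_set2_same_side i j b d : in_Xi R gens [set i; j] -> i != j -> b != d ->
  i != b -> i != d -> j != b -> j != d -> (0 < dt b d i) = (0 < dt b d j).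
Proof.
move=> hX ij bd ib id jb jd; apply/idP/idP; first exact: in_Xi_set2_side_dir.
by apply: in_Xi_set2_side_dir => //; rewrite 1?setUC 1?eq_sym.
Qed.

(** * The cyclic order of the rays *)

Lemma dt_fan_trans a x y z : x != a -> z != a ->
  0 < dt a x y -> 0 < dt a y z -> 0 < dt a x z.
Proof.
move=> xa za axy ayz.
have xz : x != z by apply: contraTneq ayz => <-; rewrite det3_swap23 oppr_gt0 -leNgt ltW.
have [ax az] : a != x /\ a != z by rewrite !(eq_sym a).
have := dt_neq0 ax az xz; case: (ltgtP (dt a x z) 0) => // axz _; exfalso.
apply: (gens_comb_neq0 (b := y) (c := z) (d := a) (al := dt a y z) (be := - dt a x z)
  (ga := dt a x y) (de := - dt x y z) xa ayz _ (ltW axy)); first by rewrite oppr_ge0 ltW.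
move=> m; have := congr1 (rpair m) (det3_plucker (gen a) (gen x) (gen y) (gen z)).
by rewrite !(rpairD, rpairN, rpairZ) rpair0; lra.
Qed.

Lemma dt_fan_triangle a x y z : a != y ->
  0 < dt a x y -> 0 < dt a y z -> 0 < dt a x z -> 0 < dt x y z.
Proof.
move=> ay axy ayz axz.
have ne u v : 0 < dt a u v -> u != v by move=> h; apply: contraTneq h => ->; rewrite det3_abb ltxx.
have := dt_neq0 (ne _ _ axy) (ne _ _ axz) (ne _ _ ayz).
case: (ltgtP (dt x y z) 0) => // xyz _; exfalso.
apply: (gens_comb_neq0 (b := x) (c := z) (d := y) (al := - dt x y z) (be := dt a y z)
  (ga := dt a x y) (de := - dt a x z) ay _ (ltW ayz) (ltW axy)); first by rewrite oppr_gt0.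
move=> m; have := congr1 (rpair m) (det3_plucker (gen a) (gen x) (gen y) (gen z)).
by rewrite !(rpairD, rpairN, rpairZ) rpair0; lra.
Qed.

Section Ranking.
Variable a0 : 'I_r.

(* The rays sorted by angle around n_a0, starting with a0: rank lists the
   vertices of the polygon counterclockwise. *)
Definition prec x y := (x != y) && ((x == a0) || (y != a0) && (0 < dt a0 x y)).

Lemma precP x y : prec x y -> x = a0 \/ [/\ x != a0, y != a0 & 0 < dt a0 x y].
Proof.
case/andP=> _ /orP [/eqP ->|/andP [ya h]]; [by left | right].
by split=> //; apply: contraTneq h => ->; rewrite det3_aac ltxx.
Qed.

Lemma prec_total (x y : 'I_r) : x != y -> prec x y || prec y x.
Proof.
move=> xy; rewrite /prec xy (eq_sym y x) xy /=.
have [->|xa] := eqVneq x a0; first by [].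
have [->|ya] := eqVneq y a0; first by rewrite orbT.
rewrite /= (det3_swap23 (gen a0) (gen y)) oppr_gt0; apply/orP.
have [ax ay] : a0 != x /\ a0 != y by rewrite !(eq_sym a0).
move: (dt_neq0 ax ay xy) => /lt_total.
by case/orP; [right | left].
Qed.

Lemma prec_neq x y : prec x y -> x != y.
Proof. by case/andP. Qed.

Lemma prec_neq_a0 x y : prec x y -> y != a0.
Proof. by move=> pxy; have := prec_neq pxy; case/precP: pxy => [->|[]//]; rewrite eq_sym. Qed.

Lemma prec_dt x y z : prec x y -> prec y z -> 0 < dt x y z.
Proof.
move=> pxy pyz; have ya := prec_neq_a0 pxy.
case/precP: pyz => [/eqP|[_ za ayz]]; first by rewrite (negbTE ya).
case/precP: pxy => [->//|[xa _ axy]].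
by apply: dt_fan_triangle (dt_fan_trans xa za axy ayz) => //; rewrite eq_sym.
Qed.

Lemma prec_trans x y z : prec x y -> prec y z -> prec x z.
Proof.
move=> pxy pyz; have ya := prec_neq_a0 pxy.
case/precP: pyz => [/eqP|[_ za ayz]]; first by rewrite (negbTE ya).
rewrite /prec; case/precP: pxy => [->|[xa _ axy]]; first by rewrite eqxx eq_sym za.
have axz := dt_fan_trans xa za axy ayz.
rewrite (negbTE xa) za axz /= andbT.
by apply: contraTneq axz => ->; rewrite det3_abb ltxx.
Qed.

Definition rank x := #|[set y | prec y x]|.

Lemma rank_lt x y : prec x y -> (rank x < rank y)%N.
Proof.
move=> pxy; apply: proper_card; apply/properP; split.
  by apply/subsetP => w; rewrite !inE => pwx; apply: prec_trans pxy.
by exists x; rewrite !inE // /prec eqxx.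
Qed.

Lemma ltn_rank x y : (rank x < rank y)%N = prec x y.
Proof.
apply/idP/idP => [lt|]; last exact: rank_lt.
have [exy|xy] := eqVneq x y; first by move: lt; rewrite exy ltnn.
by case/orP: (prec_total xy) => // /rank_lt; lia.
Qed.

Lemma rank_inj : injective rank.
Proof.
move=> x y e; apply/eqP; apply: contraT => xy.
by case/orP: (prec_total xy) => /rank_lt; rewrite e ltnn.
Qed.

Lemma rank_lt_r x : (rank x < r)%N.
Proof.
rewrite -[r]card_ord; apply: proper_card; apply/properP; split; first exact: subset_predT.
by exists x => //; rewrite !inE /prec eqxx.
Qed.

Lemma rank_a0 : rank a0 = 0%N.
Proof.
apply/eqP; rewrite cards_eq0; apply/eqP/setP => y.
by rewrite !inE /prec eqxx /=; case: eqVneq.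
Qed.

Lemma rank_surj k : (k < r)%N -> exists x, rank x = k.
Proof.
move=> kr; have /injF_bij [g _ gK] : injective (fun x => Ordinal (rank_lt_r x)).
  by move=> x y /(congr1 val) /rank_inj.
by exists (g (Ordinal kr)); have := gK (Ordinal kr); move/(congr1 val).
Qed.

Lemma dt_gt0_sorted x y z : (rank x < rank y < rank z)%N -> 0 < dt x y z.
Proof. by case/andP; rewrite !ltn_rank; apply: prec_dt. Qed.

Lemma dt_gt0_cyclic x y z : (rank x < rank y)%N ->
  (rank z < rank x)%N \/ (rank y < rank z)%N -> 0 < dt x y z.
Proof.
move=> xy [zx|yz]; last by apply: dt_gt0_sorted; rewrite xy.
by rewrite det3_cyc det3_cyc; apply: dt_gt0_sorted; rewrite zx.
Qed.

Lemma dt_lt0_cyclic x y z : (rank x < rank z < rank y)%N -> dt x y z < 0.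
Proof. by move=> h; rewrite det3_swap23 oppr_lt0; apply: dt_gt0_sorted. Qed.

Lemma dt_le0_cyclic x y z : (rank x <= rank z <= rank y)%N -> dt x y z <= 0.
Proof.
have [->|zx] := eqVneq z x; first by rewrite det3_aba.
have [->|zy] := eqVneq z y; first by rewrite det3_abb.
move: zx zy; rewrite -!(inj_eq rank_inj) => zx zy h.
by apply/ltW/dt_lt0_cyclic; move: zx zy h; lia.
Qed.

Lemma dt_ge0_cyclic x y z : (rank x <= rank y)%N ->
  (rank z <= rank x)%N \/ (rank y <= rank z)%N -> 0 <= dt x y z.
Proof.
have [->|zx] := eqVneq z x; first by rewrite det3_aba.
have [->|zy] := eqVneq z y; first by rewrite det3_abb.
have [->|xy] := eqVneq x y; first by rewrite det3_aac.
move: zx zy xy; rewrite -!(inj_eq rank_inj) => zx zy xy h1 h2.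
by apply/ltW/dt_gt0_cyclic; move: zx zy xy h1 h2; lia.
Qed.

Lemma in_Xi_consecutive x y : (rank y).+1 = rank x -> in_Xi R gens [set y; x].
Proof.
move=> yx; have ne : y != x by rewrite -(inj_eq rank_inj) -yx neq_ltn ltnSn.
apply: in_Xi_set2 => // c cy cx; apply: dt_gt0_cyclic; first by rewrite -yx.
by move: cy cx; rewrite -!(inj_eq rank_inj); lia.
Qed.

Section Arc.
Variables y' xm xM x' : 'I_r.
Hypotheses (y'xm : (rank y').+1 = rank xm) (xmxM : (rank xm <= rank xM)%N).
Hypothesis xMx' : (rank xM).+1 = rank x' \/ rank x' = 0%N /\ (rank xM).+1 = r.

(* The pairing of n_z with cross (n_xm + n_y') (n_xM + n_x'), i.e. with the
   normal of the plane through the midpoints of the edges [y', xm], [xM, x']. *)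
Let sep z := dt xm xM z + dt xm x' z + dt y' xM z + dt y' x' z.

Lemma sep_lt0 z : (rank xm <= rank z <= rank xM)%N -> sep z < 0.
Proof.
move=> /andP [mz zM]; rewrite /sep.
have T1 : dt xm xM z <= 0 by apply: dt_le0_cyclic; rewrite mz zM.
have T2 : dt y' xM z <= 0 by apply: dt_le0_cyclic; rewrite zM andbT; lia.
case: xMx' => [Mx'|[x'0 Mr]].
  have T3 : dt xm x' z <= 0 by apply: dt_le0_cyclic; rewrite mz; lia.
  have T4 : dt y' x' z < 0 by apply: dt_lt0_cyclic; lia.
  lra.
have T3 : dt xm x' z <= 0 by rewrite det3_cyc; apply: dt_le0_cyclic; rewrite x'0 mz.
have T4 : dt y' x' z <= 0 by rewrite det3_cyc; apply: dt_le0_cyclic; rewrite x'0; lia.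
have [zM'|Mz] := ltnP (rank z) (rank xM).
  have : dt y' xM z < 0 by apply: dt_lt0_cyclic; lia.
  lra.
have [mM|Mm] := ltnP (rank xm) (rank xM).
  have : dt xm x' z < 0 by rewrite det3_cyc; apply: dt_lt0_cyclic; lia.
  lra.
have := three_le_rays; have := rank_lt_r z => zr r3.
have : dt y' x' z < 0 by rewrite det3_cyc; apply: dt_lt0_cyclic; lia.
lra.
Qed.

Lemma sep_gt0 z : ~~ (rank xm <= rank z <= rank xM)%N -> 0 < sep z.
Proof.
rewrite negb_and -!ltnNge => zout; rewrite /sep; have zr := rank_lt_r z.
have T1 : 0 <= dt xm xM z by apply: dt_ge0_cyclic => //; lia.
have T2 : 0 <= dt y' xM z by apply: dt_ge0_cyclic; lia.
case: xMx' => [Mx'|[x'0 Mr]].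
  have T3 : 0 <= dt xm x' z by apply: dt_ge0_cyclic; lia.
  have T4 : 0 <= dt y' x' z by apply: dt_ge0_cyclic; lia.
  have [zy'|y'z] := ltnP (rank z) (rank y').
    have : 0 < dt y' x' z by apply: dt_gt0_cyclic; lia.
    lra.
  have [x'z|zx'] := ltnP (rank x') (rank z).
    have : 0 < dt y' x' z by apply: dt_gt0_cyclic; lia.
    lra.
  have [zm|mz] := ltnP (rank z) (rank xm).
    have : 0 < dt xm x' z by apply: dt_gt0_cyclic; lia.
    lra.
  have : 0 < dt y' xM z by apply: dt_gt0_cyclic; lia.
  lra.
have T3 : 0 <= dt xm x' z by rewrite det3_cyc; apply: dt_ge0_cyclic; lia.
have T4 : 0 <= dt y' x' z by rewrite det3_cyc; apply: dt_ge0_cyclic; lia.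
have [zy'|y'z] := ltnP (rank z) (rank y').
  have : 0 < dt y' xM z by apply: dt_gt0_cyclic; lia.
  lra.
have [mM|Mm] := ltnP (rank xm) (rank xM).
  have : 0 < dt xm xM z by apply: dt_gt0_cyclic; lia.
  lra.
have := three_le_rays => r3.
have : 0 < dt xm x' z by rewrite det3_cyc; apply: dt_gt0_cyclic; lia.
lra.
Qed.

End Arc.

End Ranking.

(** * Interlacing *)

Section Pi.
Variable Pi : {set 'I_r}.

(* a, b, c, d in cyclic order, with a, c in Pi and b, d outside: Pi is not a
   cyclic interval of rays. *)
Definition interlaced := exists a b c d, [/\ a \in Pi, c \in Pi, b \notin Pi, d \notin Pi &
  [/\ 0 < dt b c d, 0 < dt a c d, 0 < dt a b d & 0 < dt a b c]].

Lemma PiXi_set1 x : x \in Pi -> PiXi R gens Pi [set x].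
Proof. by move=> xPi; split; [rewrite sub1set | exact: in_Xi_set1]. Qed.

Lemma interlaced_cohom0_neq0 (k : fieldType) :
  interlaced -> ~ reduced_cohom_zero k (PiXi R gens Pi) 0.
Proof.
case=> a [b [c [d [aPi cPi bPi dPi [bcd acd abd abc]]]]].
have bd : b != d by apply: contraTneq bcd => ->; rewrite det3_aba ltxx.
have offbd x : x \in Pi -> x != b /\ x != d by move=> xPi; split; apply: contraTneq xPi => ->.
apply: (reduced_cohom0_neq0 (side := fun x => 0 < dt b d x) (PiXi_set1 aPi) (PiXi_set1 cPi)).
  by rewrite -(det3_cyc (gen a)) abd (det3_swap23 (gen b)) oppr_gt0 ltNge (ltW bcd).
move=> x y xy [/subsetP sub Xxy].
have [xb xd] := offbd x (sub x (set21 x y)); have [yb yd] := offbd y (sub y (set22 x y)).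
exact: in_Xi_set2_same_side.
Qed.

Lemma interlaced_Css_bounded nD : interlaced -> bounded_set (@Css_Pi R r gens nD Pi).
Proof.
case=> a [b [c [d [aPi cPi bPi dPi [bcd acd abd abc]]]]].
pose n x : R := (nD x)%:~R.
have [Ba hBa] := balanced_bound (- n a) (- n c) (- n b) (- n d) bcd (ltW acd) (ltW abd) (ltW abc).
have [Bc hBc] := balanced_bound (- n c) (- n a) (- n b) (- n d) abd (ltW acd) (ltW bcd) (ltW abc).
have [Bb hBb] := balanced_bound (n b) (n d) (n a) (n c) acd (ltW bcd) (ltW abc) (ltW abd).
apply: (@bounded_of_pairings _ (gen a) (gen b) (gen c) _ (`|Ba| + `|Bb| + `|Bc|)).
  by rewrite gt_eqF.
move=> m hm; have := congr1 (rpair m) (det3_plucker (gen a) (gen b) (gen c) (gen d)).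
rewrite !(rpairD, rpairN, rpairZ) rpair0 => rel.
have := hm a; have := hm b; have := hm c; have := hm d.
rewrite aPi cPi (negbTE bPi) (negbTE dPi) !pairing_gen => md mc mb ma.
have na : `|rpair m (gen a)| <= Ba by apply: (hBa _ _ _ _ _ (ltW ma) (ltW mc) mb md); lra.
have nc : `|rpair m (gen c)| <= Bc by apply: (hBc _ _ _ _ _ (ltW mc) (ltW ma) mb md); lra.
have nb : `|rpair m (gen b)| <= Bb.
  rewrite -normrN; apply: (hBb _ (- rpair m (gen a)) (- rpair m (gen d)) (- rpair m (gen c))).
  - by lra.
  - by rewrite lerNl.
  - by rewrite lerNl.
  - by rewrite lerNr ltW.
  - by rewrite lerNr ltW.
have := ler_norm Ba; have := ler_norm Bb; have := ler_norm Bc.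
have := normr_ge0 Ba; have := normr_ge0 Bb; have := normr_ge0 Bc.
by split; lra.
Qed.

Lemma rank_convex a0 : a0 \notin Pi -> ~ interlaced -> forall x y z, x \in Pi -> z \in Pi ->
  (rank a0 x < rank a0 y < rank a0 z)%N -> y \in Pi.
Proof.
move=> a0Pi nI x y z xPi zPi /andP [xy yz]; have [//|yPi] := boolP (y \in Pi); case: nI.
have : x != a0 by apply: contraTneq xPi => ->.
rewrite -(inj_eq (@rank_inj a0)) rank_a0 -lt0n => x0.
by exists x, y, z, a0; split => //; split; apply: (dt_gt0_cyclic (a0 := a0)); rewrite ?rank_a0; lia.
Qed.

Lemma not_interlaced_cohom0_eq0 (k : fieldType) :
  ~ interlaced -> reduced_cohom_zero k (PiXi R gens Pi) 0.
Proof.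
move=> nI; case: (pickP (fun x => x \in Pi)) => [x0 x0Pi|Pi0]; last first.
  (* No vertices: any root will do. *)
  apply: (reduced_cohom0_eq0 (x0 := Ordinal (ltn_trans (ltn0Sn 1) three_le_rays))
    (h := fun _ => 0%N)) => x [+ _].
  by rewrite sub1set; move: (Pi0 x) => /= ->.
have [a0 conv] : exists a0, forall x y z, x \in Pi -> z \in Pi ->
    (rank a0 x < rank a0 y < rank a0 z)%N -> y \in Pi.
  case: (pickP (fun z => z \notin Pi)) => [a0 a0Pi|full]; first by exists a0; apply: rank_convex.
  by exists x0 => x y z _ _ _; move: (full y) => /= /negbFE.
case: (@arg_minnP _ x0 (mem Pi) (rank a0) x0Pi) => xm xmPi xmin.
apply: (reduced_cohom0_eq0 (x0 := xm) (h := rank a0)) => x [+ _] xxm.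
rewrite sub1set => xPi.
have mx : (rank a0 xm < rank a0 x)%N.
  by rewrite ltn_neqAle (inj_eq (@rank_inj a0)) eq_sym xxm xmin.
have [y ry] : exists y, rank a0 y = (rank a0 x).-1.
  by apply: rank_surj; have := rank_lt_r a0 x; lia.
have yPi : y \in Pi.
  have [/rank_inj <- //|ym] := eqVneq (rank a0 xm) (rank a0 y).
  by apply: (conv xm y x) => //; move: ym; lia.
exists y; split; [exact: PiXi_set1 | split | lia].
  by rewrite subUset !sub1set xPi yPi.
by rewrite setUC; apply: (in_Xi_consecutive (a0 := a0)); lia.
Qed.

Lemma not_interlaced_separating : ~ interlaced ->
  exists u, forall i, 0 < rpair u (if i \in Pi then - gen i else gen i).
Proof.
move=> nI; have [m0 m0pos] := interior_functional.
case: (pickP (fun x => x \in Pi)) => [x0 x0Pi|Pi0]; last first.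
  by exists m0 => i; move: (Pi0 i) => /= ->.
case: (pickP (fun x => x \notin Pi)) => [a0 a0Pi|full]; last first.
  by exists (- m0) => i; move: (full i) => /= /negbFE ->; rewrite rpairN rpairNl opprK.
have conv := rank_convex a0Pi nI.
case: (@arg_minnP _ x0 (mem Pi) (rank a0) x0Pi) => xm xmPi xmin.
case: (@arg_maxnP _ x0 (mem Pi) (rank a0) x0Pi) => xM xMPi xMmax.
have inPi z : (z \in Pi) = (rank a0 xm <= rank a0 z <= rank a0 xM)%N.
  apply/idP/idP => [zPi|/andP [mz zM]]; first by apply/andP; split; [exact: xmin | exact: xMmax].
  have [<- //|xmz] := eqVneq xm z; have [-> //|zxM] := eqVneq z xM.
  apply: (conv xm z xM) => //.
  by move: xmz zxM; rewrite -!(inj_eq (@rank_inj a0)); lia.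
have xm0 : (0 < rank a0 xm)%N.
  by rewrite lt0n -(rank_a0 a0) (inj_eq (@rank_inj a0)); apply: contraTneq xmPi => ->.
have [y' ry'] : exists y', (rank a0 y').+1 = rank a0 xm.
  have : ((rank a0 xm).-1 < r)%N by have := rank_lt_r a0 xm; lia.
  by case/(rank_surj a0) => y' ry'; exists y'; lia.
have [x' rx'] : exists x', (rank a0 xM).+1 = rank a0 x' \/ rank a0 x' = 0%N /\ (rank a0 xM).+1 = r.
  have [Mr|] := ltnP (rank a0 xM).+1 r; last first.
    by exists a0; right; rewrite rank_a0; have := rank_lt_r a0 xM; lia.
  by have [x' rx'] := rank_surj a0 Mr; exists x'; left.
have mM : (rank a0 xm <= rank a0 xM)%N by apply: xmin.
exists (cross (gen xm + gen y') (gen xM + gen x')) => z.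
rewrite inPi; case: ifP => hz; rewrite ?rpairN rpair_cross det3DD.
  by rewrite oppr_gt0; apply: (sep_lt0 ry' mM rx').
by apply: (sep_gt0 ry' mM rx'); rewrite hz.
Qed.

Lemma separating_rec_cone_full_dim u :
  (forall i, 0 < rpair u (if i \in Pi then - gen i else gen i)) ->
  full_dim (@rec_cone_C_Pi R r gens Pi).
Proof.
move=> /full_dim_interior [A [hA rk]]; exists A; split => // l i.
by have := hA l i; case: (i \in Pi); rewrite ?pairingN pairing_gen ?rpairN.
Qed.

End Pi.
End Cone.

Unset Implicit Arguments.

Theorem mainTheorem10 (k : fieldType) (R : realType) (r : nat)
  (gens : 'I_r -> 'rV[int]_3) (nD : 'I_r -> int) (Pi : {set 'I_r}) :
  ray_data R gens ->
  let A := reduced_cohom_zero k (PiXi R gens Pi) 0 in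
  let B := full_dim (@rec_cone_C_Pi R r gens Pi) in
  let C := bounded_set (@Css_Pi R r gens nD Pi) \/ empty_set (@Css_Pi R r gens nD Pi) in
  ((A /\ B) /\ ~ (~ A /\ C)) \/ (~ (A /\ B) /\ (~ A /\ C)).
Proof.
move=> RD A B C.
case: (classic (interlaced R gens Pi)) => [hI|nI].
- have nA : ~ A by exact: @interlaced_cohom0_neq0 R r gens RD Pi k hI.
  right; split; [by case | split => //].
  by left; apply: interlaced_Css_bounded nD hI.
- have hA : A by exact: @not_interlaced_cohom0_eq0 R r gens RD Pi k nI.
  left; split; [split => // | by case].
  have [u hu] := not_interlaced_separating RD nI.
  exact: separating_rec_cone_full_dim hu.
Qed.
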